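(* For every $n\ge3$, $\mathrm{PSR}_n(n-2)=\mathrm{StoRec}_n$.
   Context: $K_n^0$ is the complete graph on vertex set $\{0,1,\dots,n\}$ with sink $0$; every vertex has degree $n$. A configuration is $c\in\mathbb{Z}_{\ge0}^n$, stable if $c_i\le n-1$ for all $i$; $c^{\max}=(n-1,\dots,n-1)$. A deterministic toppling of an unstable vertex $i$ sends one grain to each neighbour (grains sent to the sink disappear). A stochastic toppling (parameter $p\in(0,1)$) of an unstable vertex $i$ sends, independently for each incident edge, one grain along it with probability $p$, else keeps it. For $k\in\{0,\dots,n\}$, the $k$-partial SSM on $K_n^0$ is the model in which vertices $1,\dots,k$ topple stochastically and vertices $k+1,\dots,n$ topple deterministically; its Markov chain on stable configurations adds a grain at vertex $i$ with probability $\mu_i>0$ and then stabilises. $\mathrm{PSR}_n(k)$ is its set of recurrent states; equivalently, the stable configurations reachable from $c^{\max}$ by a finite sequence of grain additions and topplings of unstable vertices in which vertices $k+1,\dots,n$ topple deterministically and vertices $1,\dots,k$ send one grain along each edge of an arbitrary subset of their incident edges. $\mathrm{StoRec}_n=\mathrm{PSR}_n(n)$ is the set of recurrent states of the SSM (all vertices topple stochastically). *)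

From mathcomp Require Import all_boot.
Set Implicit Arguments. Unset Strict Implicit. Unset Printing Implicit Defensive.

(* Complete graph K_n^0 on {0,1,...,n}, sink 0.  Non-sink vertex v in {1..n}
   is represented by i : 'I_n with v = i + 1.  Every vertex has degree n:
   one edge to each other non-sink vertex and one edge to the sink. *)

Definition config (n : nat) := {ffun 'I_n -> nat}.

Definition stable n (c : config n) : Prop := forall i, c i <= n.-1.

Definition cmax n : config n := [ffun _ => n.-1].

Definition add_grain n (c : config n) (i : 'I_n) : config n :=
  [ffun j => c j + (j == i)].

(* Toppling of i, sending one grain along each edge to a non-sink neighbour
   j in S (S must not contain i), and one grain to the sink iff b (grains sent
   to the sink disappear). *)
Definition topple_sub n (c : config n) (i : 'I_n) (S : {set 'I_n}) (b : bool)
  : config n :=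
  [ffun j => if j == i then c j - (#|S| + b) else c j + (j \in S)].

(* k-partial rules: vertices i with i < k (i.e. vertices 1..k) are stochastic,
   the others deterministic.  One step of the reachability process. *)
Inductive pstep (n k : nat) : config n -> config n -> Prop :=
| pstep_add (c : config n) (i : 'I_n) : @pstep n k c (add_grain c i)
| pstep_det (c : config n) (i : 'I_n) :
    n <= c i -> k <= i ->
    @pstep n k c (topple_sub c i [set j | j != i] true)
| pstep_sto (c : config n) (i : 'I_n) (S : {set 'I_n}) (b : bool) :
    n <= c i -> i < k -> i \notin S ->
    @pstep n k c (topple_sub c i S b).

Inductive preach (n k : nat) : config n -> config n -> Prop :=
| preach_refl (c : config n) : @preach n k c c
| preach_step (c d e : config n) :
    @preach n k c d -> @pstep n k d e -> @preach n k c e.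

Definition PSR (n k : nat) (c : config n) : Prop :=
  stable c /\ @preach n k (cmax n) c.

Definition StoRec (n : nat) (c : config n) : Prop := @PSR n n c.

From mathcomp Require Import all_boot.
From mathcomp Require Import zify.

Set Implicit Arguments.
Unset Strict Implicit.
Unset Printing Implicit Defensive.

(* A configuration reachable in the stochastic model keeps at least
   'C(#|A|, 2) grains on every set [A] of non-sink vertices: a vertex of [A]
   that fires holds at least [n] grains and sends at most [n - #|A| + 1] of
   them out of [A].  By Hakimi's theorem this condition lets one orient the
   edges between non-sink vertices so that every vertex [i] has in-degree at
   most [c i].  Such an orientation gives a firing sequence in which only
   vertices [1..n-2] behave stochastically: the two deterministic vertices
   fire first, then each stochastic vertex [v] in turn receives a grain and
   fires once, sending grains along its out-edges and to the vertices not yet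
   processed, and keeping one grain per in-edge. *)

Section Orientation.

Variable T : finType.
Implicit Types (G : {set {set T}}) (A B W : {set T}) (f : T -> nat) (o : {set T} -> T).

Definition pairs W : {set {set T}} := [set P : {set T} | P \subset W & #|P| == 2].

Definition edges_in G A : {set {set T}} := [set P in G | P \subset A].

Definition edge_count_le G f := forall A, #|edges_in G A| <= \sum_(i in A) f i.

Definition indeg G o (v : T) := #|[set P in G | o P == v]|.

Lemma pairsS W W' : W \subset W' -> pairs W \subset pairs W'.
Proof.
move=> sWW'; apply/subsetP => P; rewrite !inE => /andP[sPW ->].
by rewrite (subset_trans sPW sWW').
Qed.

Lemma card_edges_in_pairsT A : #|edges_in (pairs [set: T]) A| = 'C(#|A|, 2).
Proof. by rewrite -cards_draws; apply: eq_card => P; rewrite !inE subsetT andbC. Qed.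

Lemma sum_setU_setI f A B :
  \sum_(i in A :|: B) f i + \sum_(i in A :&: B) f i =
  \sum_(i in A) f i + \sum_(i in B) f i.
Proof.
rewrite (big_setID B) [\sum_(i in A) _](big_setID B) setDUl setDv setU0.
by rewrite [A :|: B]setUC setUK /=; lia.
Qed.

Lemma edges_in_crossing G u w A B :
  [set u; w] \in G -> u \in A -> w \notin A -> w \in B -> u \notin B ->
  #|edges_in G A| + #|edges_in G B| < #|edges_in G (A :|: B)| + #|edges_in G (A :&: B)|.
Proof.
move=> Guw uA wA wB uB.
have -> : edges_in G (A :&: B) = edges_in G A :&: edges_in G B.
  by apply/setP => P; rewrite !inE subsetI; case: (P \in G).
rewrite -cardsUI ltn_add2r; apply: proper_card; apply/properP; split.
  apply/subsetP => P; rewrite !inE => /orP[] /andP[-> sPAB]; apply: subset_trans sPAB _;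
    [exact: subsetUl | exact: subsetUr].
exists [set u; w]; rewrite !inE Guw ?subUset ?sub1set ?inE ?uA ?wB ?orbT //=.
by rewrite (negPf wA) (negPf uB).
Qed.

Lemma sum_sub_pred1 f u A : 0 < f u ->
  \sum_(i in A) (f i - (i == u)) + (u \in A) = \sum_(i in A) f i.
Proof.
move=> fu_gt0; have [uA | /negPf uA] := boolP (u \in A).
  rewrite !(big_setD1 u uA) /= eqxx (eq_bigr f) => [|i]; first lia.
  by rewrite !inE => /andP[/negPf-> _]; rewrite subn0.
by rewrite addn0; apply: eq_bigr => i iA; case: eqP iA => [->|_]; rewrite ?uA ?subn0.
Qed.

Lemma edges_in_setD1 G P A : P \in G ->
  #|edges_in (G :\ P) A| + (P \subset A) = #|edges_in G A|.
Proof.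
move=> PG; rewrite [RHS](cardsD1 P) !inE PG addnC; congr (_ + _).
by apply: eq_card => Q; rewrite !inE andbA.
Qed.

Lemma edge_count_le_direct G f u w :
  edge_count_le G f -> [set u; w] \in G -> u != w ->
  (forall A, u \in A -> w \notin A -> #|edges_in G A| < \sum_(i in A) f i) ->
  0 < f u /\ edge_count_le (G :\ [set u; w]) (fun i => f i - (i == u)).
Proof.
move=> Gf Guw uw loose.
have fu_gt0 : 0 < f u.
  have := loose [set u]; rewrite big_set1 !inE eqxx eq_sym uw.
  by move=> /(_ isT isT) /(leq_ltn_trans (leq0n _)).
split=> // A; have := loose A; have := sum_sub_pred1 A fu_gt0.
have := edges_in_setD1 A Guw; have := Gf A; rewrite subUset !sub1set.
move: #|edges_in _ A| #|edges_in G A| (\sum_(i in A) f i) (\sum_(i in A) (f i - _)).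
by case: (u \in A); case: (w \in A) => /=; lia.
Qed.

(* If neither orientation of [u, w] worked, there would be sets [A] and [B]
   with [u \in A :\: B], [w \in B :\: A] and [\sum_(i in _) f i] at most their
   edge count; [edges_in_crossing] contradicts this. *)
Lemma direct_edge G f u w :
  edge_count_le G f -> [set u; w] \in G -> u != w ->
  exists2 z, z \in [set u; w] &
    0 < f z /\ edge_count_le (G :\ [set u; w]) (fun i => f i - (i == z)).
Proof.
move=> Gf Guw uw.
pose tight (x y : T) := [exists A : {set T},
  [&& x \in A, y \notin A & \sum_(i in A) f i <= #|edges_in G A|]].
have direct x y : [set x; y] = [set u; w] -> x != y -> ~~ tight x y ->
    0 < f x /\ edge_count_le (G :\ [set u; w]) (fun i => f i - (i == x)).
  move=> Exy xy /existsPn loose; rewrite -Exy; apply: edge_count_le_direct; rewrite ?Exy //.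
  by move=> A xA yA; have := loose A; rewrite xA yA /= -ltnNge.
have [/existsP[A /and3P[uA wA tA]] | ] := boolP (tight u w); last first.
  by exists u; rewrite ?inE ?eqxx //; apply: direct.
have [/existsP[B /and3P[wB uB tB]] | ] := boolP (tight w u); last first.
  by exists w; rewrite ?inE ?eqxx ?orbT //; apply: direct; rewrite 1?setUC // eq_sym.
have := edges_in_crossing Guw uA wA wB uB; have := sum_setU_setI f A B.
by have := Gf (A :|: B); have := Gf (A :&: B); lia.
Qed.

Lemma indeg_subset G G' o v : G \subset G' -> indeg G o v <= indeg G' o v.
Proof.
move=> sGG'; apply/subset_leq_card/subsetP => P.
by rewrite !inE => /andP[/(subsetP sGG')-> ->].
Qed.

Lemma indeg_proper G G' o P : G \subset G' -> P \in G' -> P \notin G ->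
  indeg G o (o P) < indeg G' o (o P).
Proof.
move=> sGG' PG' PG; apply: proper_card; apply/properP; split.
  by apply/subsetP => Q; rewrite !inE => /andP[/(subsetP sGG')-> ->].
by exists P; rewrite !inE ?PG' ?eqxx // (negPf PG).
Qed.

Theorem hakimi_orientation (x0 : T) G f :
  {in G, forall P : {set T}, #|P| = 2} -> edge_count_le G f ->
  exists o, {in G, forall P, o P \in P} /\ forall v, indeg G o v <= f v.
Proof.
have [m] := ubnP #|G|; elim: m G f => // m IH G f ltGm Gpairs Gf.
have [-> | [P PG]] := set_0Vmem G.
  exists (fun=> x0); split=> [P|v]; first by rewrite inE.
  by rewrite /indeg (eq_card (B := pred0)) ?card0 // => P; rewrite !inE.
have /cards2P[u [w [uw EP]]] : #|P| == 2 by rewrite Gpairs.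
rewrite EP in PG *.
have [z Pz [fz_gt0 Gfz]] := direct_edge Gf PG uw.
have [|Q /setD1P[_ /Gpairs]//|o' [o'head o'le]] := IH (G :\ [set u; w]) _ _ _ Gfz.
  by move: ltGm; rewrite (cardsD1 [set u; w]) PG.
exists (fun Q => if Q == [set u; w] then z else o' Q); split=> [Q QG|v].
  by case: eqP => [->//|/eqP QP]; apply: o'head; rewrite !inE QP.
have := o'le v; rewrite /indeg [#|[set Q in G | _]|](cardsD1 [set u; w]) !inE eqxx PG /=.
have -> : [set Q in G | (if Q == [set u; w] then z else o' Q) == v] :\ [set u; w] =
          [set Q in G :\ [set u; w] | o' Q == v].
  by apply/setP => Q; rewrite !inE; case: eqP.
move: #|[set Q in G :\ _ | _]|.
by case: (eqVneq z v) => [<-|_] /=; lia.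
Qed.

End Orientation.

Lemma pstep_widen n k k' (c d : config n) : k <= k' -> pstep k c d -> pstep k' c d.
Proof.
move=> kk'; case=> [{}c i | {}c i ci _ | {}c i S b ci ik iS].
- exact: pstep_add.
- have [ik' | k'i] := ltnP i k'; last exact: pstep_det.
  by apply: pstep_sto => //; rewrite inE eqxx.
- by apply: pstep_sto => //; apply: leq_trans ik kk'.
Qed.

Lemma preach_widen n k k' (c d : config n) : k <= k' -> preach k c d -> preach k' c d.
Proof.
move=> kk'; elim=> [{}c | {}c d0 e _ IH st]; first exact: preach_refl.
exact: preach_step IH (pstep_widen kk' st).
Qed.

Section Adjust.

Variables n k : nat.
Implicit Types c d e : config n.

Definition config_dist d d' := \sum_j ((d j - d' j) + (d' j - d j)).

Lemma config_dist_lt d1 d d' (j : 'I_n) : (forall i, i != j -> d1 i = d i) ->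
  (d1 j - d' j) + (d' j - d1 j) < (d j - d' j) + (d' j - d j) ->
  config_dist d1 d' < config_dist d d'.
Proof.
move=> same ltj; rewrite /config_dist (bigD1 j) //= [X in _ < X](bigD1 j) //=.
by rewrite (eq_bigr (fun i => (d i - d' i) + (d' i - d i))) ?ltn_add2r // => i /same->.
Qed.

(* Grains can always be added, and a stochastic vertex holding at least [n]
   grains can lose one by sending a single grain to the sink. *)
Lemma preach_adjust c d d' :
  (forall j, d j <= d' j \/ j < k /\ n.-1 <= d' j) -> preach k c d -> preach k c d'.
Proof.
have [m] := ubnP (config_dist d d'); elim: m d => // m IH d; rewrite ltnS => ltdm dd' cd.
have [j dj | same] := pickP (fun j => d j != d' j); last first.
  by have <- : d = d' by apply/ffunP => j; apply/eqP/negbFE/same.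
have [d1 [cd1 d1j closer same]] : exists d1 : config n, [/\ preach k c d1,
    d1 j <= d' j \/ j < k /\ n.-1 <= d' j,
    (d1 j - d' j) + (d' j - d1 j) < (d j - d' j) + (d' j - d j) &
    forall i, i != j -> d1 i = d i].
  have [lt_dd' | lt_d'd | eq_dd'] := ltngtP (d j) (d' j); last by rewrite eq_dd' eqxx in dj.
    exists (add_grain d j); split=> [||| i /negPf ij]; rewrite ?ffunE ?eqxx ?ij ?addn0 //=.
    - exact: preach_step cd (pstep_add _ _ _).
    - by left; rewrite addn1.
    - by lia.
  have [jk d'j] : j < k /\ n.-1 <= d' j by case: (dd' j) => //; lia.
  exists (topple_sub d j set0 true); split=> [||| i /negPf ij];
    rewrite ?ffunE ?cards0 ?in_set0 ?eqxx ?ij ?addn0 //.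
  - by apply: preach_step cd _; apply: pstep_sto; rewrite ?in_set0 //; lia.
  - by right.
  - by lia.
apply: (IH d1) => [|i|//]; first exact: leq_trans (config_dist_lt same closer) ltdm.
by have [->|/same->] := eqVneq i j.
Qed.

End Adjust.

Section Invariant.

Variables n k : nat.
Implicit Types c d : config n.

Definition bin2_bounded d := forall A : {set 'I_n}, 'C(#|A|, 2) <= \sum_(i in A) d i.

Lemma bin2_bounded_cmax : bin2_bounded (cmax n).
Proof.
move=> A; rewrite (eq_bigr (fun=> n.-1)) => [|i _]; last by rewrite ffunE.
rewrite sum_nat_const bin2 leq_half_double.
have : #|A| <= n by rewrite -[X in _ <= X]card_ord max_card.
nia.
Qed.

Lemma sum_mem_cardI (B S : {set 'I_n}) : \sum_(j in B) (j \in S) = #|B :&: S|.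
Proof.
rewrite -sum1_card big_mkcond [RHS]big_mkcond; apply: eq_bigr => j _.
by rewrite inE; case: (j \in B); case: (j \in S).
Qed.

Lemma bin2_bounded_topple d i (S : {set 'I_n}) b :
  n <= d i -> i \notin S -> bin2_bounded d -> bin2_bounded (topple_sub d i S b).
Proof.
move=> di iS dB A.
have [iA | iA] := boolP (i \in A); last first.
  apply: leq_trans (dB A) _; apply: leq_sum => j jA; rewrite ffunE.
  by case: eqP jA iA => [-> -> //|_ _ _]; exact: leq_addr.
set B := A :\ i.
have cardA : #|A| = #|B|.+1 by rewrite (cardsD1 i A) iA.
have sumB : \sum_(j in B) topple_sub d i S b j = \sum_(j in B) d j + #|B :&: S|.
  rewrite -sum_mem_cardI -big_split; apply: eq_bigr => j.
  by rewrite !inE ffunE => /andP[/negPf-> _].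
have outS : #|S :\: B| + #|A| <= n.
  have : S :\: B \subset ~: A.
    apply/subsetP => j; rewrite !inE negb_and negbK => /andP[/orP[/eqP->|//] jS].
    by rewrite jS in iS.
  by move/subset_leq_card; have := cardsC A; rewrite card_ord; lia.
have := cardsID B S; have := dB B.
rewrite (big_setD1 i iA) /= sumB cardA binS bin1 setIC ffunE eqxx.
by move: outS; rewrite cardA; case: b {sumB} => /=; lia.
Qed.

Lemma bin2_bounded_step c d : pstep k c d -> bin2_bounded c -> bin2_bounded d.
Proof.
case=> [{}c i | {}c i ci _ | {}c i S b ci _ iS] cB.
- by move=> A; apply: leq_trans (cB A) _; apply: leq_sum => j _; rewrite ffunE leq_addr.
- by apply: bin2_bounded_topple; rewrite // inE eqxx.
- exact: bin2_bounded_topple.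
Qed.

Lemma bin2_bounded_reach c d : bin2_bounded c -> preach k c d -> bin2_bounded d.
Proof. by move=> cB cd; elim: cd cB => // {}c d0 e _ IH /bin2_bounded_step st /IH. Qed.

End Invariant.

Lemma card_set_neq n (i : 'I_n) : #|[set j | j != i]| = n.-1.
Proof. by rewrite -[n in RHS]card_ord -(cardsC1 i); apply: eq_card => j; rewrite !inE. Qed.

(* Firing the two deterministic vertices [a] and [b] one after the other
   leaves [a] with one grain, [b] with none and every other vertex with
   [n + 1] grains. *)
Lemma preach_det_pair n (e : config n) (a b : 'I_n) :
  a != b -> n - 2 <= a -> n - 2 <= b ->
  (forall j : 'I_n, j < n - 2 -> e j = n.-1) -> 0 < e a ->
  preach (n - 2) (cmax n) e.
Proof.
move=> ab an bn eE ea; have a_lt := ltn_ord a; have b_lt := ltn_ord b.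
set d0 := add_grain (cmax n) a.
set d1 := topple_sub d0 a [set j | j != a] true.
set d2 := topple_sub d1 b [set j | j != b] true.
have d1b : d1 b = n by rewrite !ffunE eq_sym (negPf ab) inE eq_sym ab /=; lia.
have d2a : d2 a = 1.
  by rewrite !ffunE (negPf ab) eqxx inE ab card_set_neq /=; lia.
have d2b : d2 b = 0 by rewrite ffunE eqxx d1b card_set_neq /=; lia.
have reach_d2 : preach (n - 2) (cmax n) d2.
  apply: (preach_step (d := d1)); last by apply: pstep_det; rewrite ?d1b.
  apply: (preach_step (d := d0)); last by apply: pstep_det; rewrite // !ffunE eqxx /=; lia.
  exact: preach_step (preach_refl _ _) (pstep_add _ _ _).
apply: preach_adjust reach_d2 => j.
have [-> | ja] := eqVneq j a; first by left; rewrite d2a.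
have [-> | jb] := eqVneq j b; first by left; rewrite d2b.
have jn : j < n - 2.
  have := ltn_ord j; move: (ja : (j : nat) != a) (jb : (j : nat) != b) (ab : (a : nat) != b); lia.
by right; rewrite eE.
Qed.

Section Stages.

Variable n : nat.
Hypothesis n_gt1 : 1 < n.
Variable o : {set 'I_n} -> 'I_n.
Hypothesis o_head : {in pairs [set: 'I_n], forall P, o P \in P}.

(* [stage_set p] holds the vertices already in place at stage [p]: the two
   deterministic vertices and the stochastic vertices [j < p].  Firing [v]
   once from [retract v e] yields [e]. *)
Definition stage_set p : {set 'I_n} := [set j : 'I_n | (j < p) || (n - 2 <= j)].

Definition saturated_from p (e : config n) := forall j : 'I_n, p <= j < n - 2 -> e j = n.-1.

Definition stage_bounded p (e : config n) :=
  forall v, indeg (pairs (stage_set p)) o v <= e v.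

Definition heads_from (v : 'I_n) := [set j in stage_set v | o [set v; j] == j].

Definition retract (v : 'I_n) (e : config n) : config n :=
  [ffun j => if j == v then n.-1 else e j - (j \in heads_from v)].

Lemma stage_head p P : P \in pairs (stage_set p) -> o P \in P.
Proof. by move=> PX; apply: o_head; move: PX; apply/subsetP/pairsS/subsetT. Qed.

Lemma stage_setS (v : 'I_n) : stage_set v.+1 = v |: stage_set v.
Proof. by apply/setP => j; rewrite !inE ltnS leq_eqVlt -orbA. Qed.

Lemma stage_set_full : stage_set (n - 2) = [set: 'I_n].
Proof. by apply/setP => j; rewrite !inE; case: ltnP. Qed.

Lemma notin_stage_set (v : 'I_n) : v < n - 2 -> v \notin stage_set v.
Proof. by rewrite inE ltnn /= -ltnNge. Qed.

Lemma stage_edge (v j : 'I_n) : v < n - 2 -> j \in stage_set v ->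
  [set v; j] \in pairs (stage_set v.+1).
Proof.
move=> vn jX; rewrite inE stage_setS cards2 subUset !sub1set !in_setU1 eqxx jX orbT /=.
by case: (eqVneq v j) jX => [<-|//]; rewrite (negPf (notin_stage_set vn)).
Qed.

Lemma reach_stage0 e : saturated_from 0 e -> stage_bounded 0 e -> preach (n - 2) (cmax n) e.
Proof.
move=> eS eB; have a_lt : n - 2 < n by lia.
have b_lt : n.-1 < n by lia.
set a := Ordinal a_lt; set b := Ordinal b_lt.
have ab : a != b by rewrite -val_eqE /=; lia.
have ab_pair : [set a; b] \in pairs (stage_set 0).
  by rewrite inE cards2 ab subUset !sub1set !inE /= leqnn; lia.
have e_pos : 0 < e (o [set a; b]).
  by apply: leq_trans (eB _); apply/card_gt0P; exists [set a; b]; rewrite inE ab_pair eqxx.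
have eE (j : 'I_n) : j < n - 2 -> e j = n.-1 by move=> jn; apply: eS.
have := stage_head ab_pair.
rewrite !inE => /orP[] /eqP oab; rewrite oab in e_pos.
  by apply: (preach_det_pair ab) => //=; lia.
by apply: (@preach_det_pair n e b a) => //=; rewrite 1?eq_sym //; lia.
Qed.

Lemma indeg_heads_from (v j : 'I_n) : v < n - 2 ->
  indeg (pairs (stage_set v)) o j + (j \in heads_from v) <= indeg (pairs (stage_set v.+1)) o j.
Proof.
move=> vn; have sub : pairs (stage_set v) \subset pairs (stage_set v.+1).
  by apply: pairsS; rewrite stage_setS subsetUr.
have [|_] := boolP (j \in heads_from v); last by rewrite addn0 indeg_subset.
rewrite inE => /andP[jX /eqP oj]; rewrite addn1 -oj; apply: indeg_proper => //.
  exact: stage_edge.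
by rewrite inE subUset !sub1set (negPf (notin_stage_set vn)).
Qed.

Lemma card_tails_le_indeg (v : 'I_n) : v < n - 2 ->
  #|stage_set v :\: heads_from v| <= indeg (pairs (stage_set v.+1)) o v.
Proof.
move=> vn; have vX := notin_stage_set vn.
rewrite -(card_in_imset (f := fun j => [set v; j])) => [|j1 j2 j1X _ /= E].
  apply/subset_leq_card/subsetP => _ /imsetP[j /setDP[jX jH] ->].
  have vj := stage_edge vn jX; rewrite inE vj /=.
  have := stage_head vj.
  by rewrite !inE => /orP[// | oj]; rewrite inE jX oj in jH.
have : j1 \in [set v; j2] by rewrite -E !inE eqxx orbT.
by rewrite !inE => /orP[/eqP j1v | /eqP //]; move: j1X; rewrite j1v inE (negPf vX) andbF.
Qed.

Lemma retract_saturated (v : 'I_n) e :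
  v < n - 2 -> saturated_from v.+1 e -> saturated_from v (retract v e).
Proof.
move=> vn eS j /andP[vj jn]; rewrite ffunE; case: eqP => [//|/eqP jv].
have jX : j \notin stage_set v by rewrite inE negb_or -leqNgt -ltnNge vj.
rewrite inE (negPf jX) subn0; apply: eS; move: (jv : (j : nat) != v); lia.
Qed.

Lemma retract_bounded (v : 'I_n) e :
  v < n - 2 -> stage_bounded v.+1 e -> stage_bounded v (retract v e).
Proof.
move=> vn eB j; rewrite ffunE; case: eqP => [->|_].
  apply: leq_trans (_ : _ <= 0) (leq0n _); rewrite leqn0 cards_eq0; apply/eqP/setP => P.
  rewrite !inE; apply/andP => -[/andP[sPX P2] /eqP oP].
  have vP : v \in P by rewrite -oP; apply: (@stage_head v); rewrite inE sPX P2.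
  by have := notin_stage_set vn; rewrite (subsetP sPX _ vP).
have := leq_trans (indeg_heads_from j vn) (eB j).
by move: (indeg _ _ _); lia.
Qed.

(* [v] receives one grain and fires, sending one grain to each vertex of
   [heads_from v] and of [W]; it keeps one grain per edge directed into [v]. *)
Lemma reach_from_retract (v : 'I_n) e : v < n - 2 ->
  saturated_from v.+1 e -> stage_bounded v.+1 e ->
  preach (n - 2) (cmax n) (retract v e) -> preach (n - 2) (cmax n) e.
Proof.
move=> vn eS eB reach0.
set X := stage_set v; set H := heads_from v; set W : {set 'I_n} := ~: (v |: X).
have vX : v \notin X := notin_stage_set vn.
have HX : H \subset X by apply/subsetP => j; rewrite inE => /andP[].
have HW : H :&: W = set0.
  apply/eqP; rewrite -subset0 -(setICr (v |: X)) setSI //.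
  exact: subset_trans HX (subsetUr _ _).
have vS : v \notin H :|: W.
  by rewrite in_setU in_setC setU11 orbF; apply: contra vX; exact: (subsetP HX v).
have cardW : #|W| + #|X| + 1 = n.
  by have := cardsC (v |: X); rewrite cardsU1 vX card_ord -/W /=; move: #|W| #|X|; lia.
have cardS : #|H :|: W| = #|H| + #|W| by rewrite -cardsUI HW cards0 addn0.
have tail_v : n - (#|H| + #|W| + 1) = #|X :\: H|.
  by rewrite cardsD (setIidPr HX) -[m in m - _]cardW [#|H| + _]addnC subnDr subnDl.
have H_le j : indeg (pairs X) o j + (j \in H) <= e j.
  exact: leq_trans (indeg_heads_from j vn) (eB j).
set d1 := add_grain (retract v e) v.
have d1v : d1 v = n by rewrite !ffunE !eqxx /=; lia.
have d1v_ge : n <= d1 v by rewrite d1v.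
apply: preach_adjust (preach_step (preach_step reach0 (pstep_add _ _ v))
                        (pstep_sto (S := H :|: W) true d1v_ge vn vS)) => j.
rewrite ffunE; have [-> | jv] := eqVneq j v.
  left; rewrite d1v cardS /= tail_v; exact: leq_trans (card_tails_le_indeg vn) (eB v).
have [jX | jX] := boolP (j \in X); last first.
  right; move: jX (jv : (j : nat) != v); rewrite inE negb_or -leqNgt -ltnNge => /andP[vj jn] jv'.
  by split=> //; rewrite eS //; lia.
left; rewrite !ffunE (negPf jv) addn0 in_setU in_setC in_setU1 (negPf jv) jX orbF.
by have := H_le j; case: (j \in H) => /=; lia.
Qed.

Lemma reach_stage p : p <= n - 2 ->
  forall e, saturated_from p e -> stage_bounded p e -> preach (n - 2) (cmax n) e.
Proof.
elim: p => [_ | p IH pn] e eS eB; first exact: reach_stage0.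
have p_lt : p < n by lia.
pose v := Ordinal p_lt.
apply: (@reach_from_retract v) => //.
by apply: IH; [lia | exact: (@retract_saturated v) | exact: (@retract_bounded v)].
Qed.

End Stages.

Theorem theorem5p6 (n : nat) : 3 <= n ->
  forall c : config n, @PSR n (n - 2) c <-> StoRec c.
Proof.
move=> n_ge3 c; split=> -[c_stable c_reach]; split=> //.
  exact: preach_widen (leq_subr 2 n) c_reach.
have n_gt1 : 1 < n by lia.
have x0 : 'I_n := Ordinal (ltnW n_gt1).
have c_sparse : edge_count_le (pairs [set: 'I_n]) c.
  move=> A; rewrite card_edges_in_pairsT; move: A.
  exact: bin2_bounded_reach (@bin2_bounded_cmax n) c_reach.
have [|o [o_head o_indeg]] := hakimi_orientation x0 _ c_sparse.
  by move=> P; rewrite inE => /andP[_ /eqP].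
apply: (reach_stage n_gt1 o_head (leqnn _)) => [j | v]; first by lia.
by rewrite stage_set_full.
Qed.
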